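(* Let $(H,\leq,\ast)$ be a discrete $\omega$-dimensional poc-set and let $\Sigma\in\Re H$ have finite codimension $\delta>0$. Then there exists $\Sigma_1\in\Re H$ with $\Sigma_1<\Sigma$ and $\operatorname{codim}(\Sigma_1)=\delta-1$.
   Context: Poc-set: poset with minimum $0$ and order-reversing involution $\ast$ with $h\le h^\ast\Rightarrow h=0$. Discrete: intervals between proper elements finite. Transverse: none of $h\le k,h^\ast\le k,h\le k^\ast,h^\ast\le k^\ast$; $\omega$-dimensional: no infinite transverse subset. Ultrafilter: $\alpha\subseteq H$ with exactly one of $h,h^\ast$ in $\alpha$ for each $h$, no $h,k\in\alpha$ with $h\le k^\ast$; $H^\circ$ with topology from $2^H$. Almost-equality: finite difference. $\Re H$ is the set of almost-equality classes, partially ordered by $\Sigma_1\ge\Sigma_2$ iff $\Sigma_1\cap\overline{\Sigma_2}\ne\varnothing$ (closure in $H^\circ$). For chains $c=(c_n)$, $d=(d_m)$ (infinite strictly descending), $c$ dominates $d$ if for every $m$ there is $n$ with $c_n\le d_m$; $c\sim d$ if each dominates the other. The codimension of $\Sigma$ is the cardinality of the set of $\sim$-classes of infinite strictly descending chains contained in $\xi$, for any $\xi\in\Sigma$ (this is independent of $\xi$). *)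

From Stdlib Require Import List Arith.
Import ListNotations.

Record PocSet := {
  carrier :> Type;
  le : carrier -> carrier -> Prop;
  zero : carrier;
  star : carrier -> carrier;
  le_refl : forall h, le h h;
  le_trans : forall h k l, le h k -> le k l -> le h l;
  le_antisym : forall h k, le h k -> le k h -> h = k;
  zero_min : forall h, le zero h;
  star_invol : forall h, star (star h) = h;
  star_rev : forall h k, le h k -> le (star k) (star h);
  star_nonself : forall h, le h (star h) -> h = zero
}.

Arguments le {p} _ _.
Arguments zero {p}.
Arguments star {p} _.

Section Defs.
Variable H : PocSet.

Definition finite_set (S : H -> Prop) : Prop :=
  exists l : list H, forall x, S x -> In x l.

Definition proper (h : H) : Prop := h <> zero /\ h <> star zero.

Definition discrete : Prop :=
  forall h k : H, proper h -> proper k ->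
    finite_set (fun x => le h x /\ le x k).

Definition transverse (h k : H) : Prop :=
  ~ le h k /\ ~ le (star h) k /\ ~ le h (star k) /\ ~ le (star h) (star k).

Definition transverse_set (S : H -> Prop) : Prop :=
  forall h k, S h -> S k -> h <> k -> transverse h k.

Definition omega_dimensional : Prop :=
  forall S : H -> Prop, transverse_set S -> finite_set S.

Definition ultrafilter (a : H -> Prop) : Prop :=
  (forall h, (a h /\ ~ a (star h)) \/ (~ a h /\ a (star h))) /\
  (forall h k, a h -> a k -> ~ le h (star k)).

Definition almost_equal (a b : H -> Prop) : Prop :=
  finite_set (fun h => (a h /\ ~ b h) \/ (b h /\ ~ a h)).

Definition uclass (xi : H -> Prop) : (H -> Prop) -> Prop :=
  fun eta => ultrafilter eta /\ almost_equal eta xi.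

(* closure in H° (subspace of 2^H with the product topology): every basic
   neighbourhood {eta | eta agrees with xi on the finite set F} meets S *)
Definition closure (S : (H -> Prop) -> Prop) (xi : H -> Prop) : Prop :=
  ultrafilter xi /\
  forall F : list H, exists eta, S eta /\ forall h, In h F -> (eta h <-> xi h).

(* order on Re H: S1 >= S2 iff S1 meets the closure of S2 *)
Definition re_le (S2 S1 : (H -> Prop) -> Prop) : Prop :=
  exists eta, S1 eta /\ closure S2 eta.

Definition same_set (S1 S2 : (H -> Prop) -> Prop) : Prop :=
  forall eta, S1 eta <-> S2 eta.

Definition re_lt (S2 S1 : (H -> Prop) -> Prop) : Prop :=
  re_le S2 S1 /\ ~ same_set S2 S1.

Definition lt (h k : H) : Prop := le h k /\ h <> k.

Definition desc_chain_in (xi : H -> Prop) (c : nat -> H) : Prop :=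
  (forall n, lt (c (S n)) (c n)) /\ (forall n, xi (c n)).

Definition dominates (c d : nat -> H) : Prop :=
  forall m, exists n, le (c n) (d m).

Definition chain_equiv (c d : nat -> H) : Prop :=
  dominates c d /\ dominates d c.

(* the set of ~-classes of infinite strictly descending chains contained
   in xi has exactly n elements: n pairwise inequivalent representatives
   such that every chain is equivalent to one of them *)
Definition codim (xi : H -> Prop) (n : nat) : Prop :=
  exists reps : nat -> nat -> H,
    (forall i, i < n -> desc_chain_in xi (reps i)) /\
    (forall i j, i < n -> j < n -> i <> j -> ~ chain_equiv (reps i) (reps j)) /\
    (forall c, desc_chain_in xi c -> exists i, i < n /\ chain_equiv c (reps i)).

End Defs.

(* Among the finitely many classes of descending chains in xi choose one,
   represented by c, that no other class dominates; then for some N no term of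
   another representative lies below c(N+1).  Flipping xi on the cone
   A = {h in xi | h <= c(N+1)}, i.e. replacing A by A*, gives an ultrafilter xi1,
   because A is down-closed in xi and contains no h, k with h* <= k.  By
   discreteness a descending chain of xi1 can contain only finitely many terms
   of A*, hence lies in xi outside A; so the chain classes of xi1 are those of
   xi except the class of c.  Flipping instead a cofinite part of A that avoids
   everything above a given finite set F gives ultrafilters almost equal to xi1
   that agree with xi on F, so xi is in the closure of the class of xi1, and
   the two classes differ because A contains a tail of c. *)

From Stdlib Require Import List Arith.
From Stdlib Require Import Classical Lia FinFun.

Lemma exists_minimal_index (R : nat -> nat -> Prop) n :
  (forall a b c, R a b -> R b c -> R a c) ->
  (forall i j, i < n -> j < n -> i <> j -> ~ (R i j /\ R j i)) -> 0 < n ->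
  exists k, k < n /\ forall i, i < n -> i <> k -> ~ R i k.
Proof.
  intros Htrans Hasym. induction n as [|n IH]; intros Hpos; [lia|].
  destruct (Nat.eq_dec n 0) as [->|Hn].
  - exists 0. split; [lia|]. intros i Hi Hik. lia.
  - destruct IH as [k [Hk Hmin]]; [intros i j Hi Hj; apply Hasym; lia|lia|].
    destruct (classic (R n k)) as [Hnk|Hnk].
    + exists n. split; [lia|]. intros i Hi Hin Hin'.
      destruct (Nat.eq_dec i k) as [->|Hik].
      * apply (Hasym k n); auto; lia.
      * apply (Hmin i); [lia|exact Hik|eauto].
    + exists k. split; [lia|]. intros i Hi Hik.
      destruct (Nat.eq_dec i n) as [->|Hin]; [exact Hnk|]. apply Hmin; lia.
Qed.

Definition skip (k i : nat) : nat := if i <? k then i else S i.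

Lemma skip_neq k i : skip k i <> k.
Proof. unfold skip. destruct (Nat.ltb_spec i k); lia. Qed.

Lemma skip_lt k n i : i < n - 1 -> skip k i < n.
Proof. unfold skip. destruct (Nat.ltb_spec i k); lia. Qed.

Lemma skip_inj k : Injective (skip k).
Proof.
  intros i j. unfold skip. destruct (Nat.ltb_spec i k), (Nat.ltb_spec j k); lia.
Qed.

Lemma skip_onto k n j : k < n -> j < n -> j <> k -> exists i, i < n - 1 /\ skip k i = j.
Proof.
  intros Hk Hj Hjk. unfold skip. destruct (Nat.ltb_spec j k).
  - exists j. split; [lia|]. now rewrite (proj2 (Nat.ltb_lt j k)).
  - exists (j - 1). split; [lia|].
    rewrite (proj2 (Nat.ltb_ge (j - 1) k)) by lia. lia.
Qed.

Section PocSets.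
Variable H : PocSet.

Lemma le_star_zero (h : H) : le h (star zero).
Proof. rewrite <- (star_invol H h) at 1. apply star_rev, zero_min. Qed.

Lemma finite_set_incl (X Y : H -> Prop) :
  (forall h, X h -> Y h) -> finite_set H Y -> finite_set H X.
Proof. intros HXY [l Hl]. exists l. auto. Qed.

Lemma finite_set_union (X Y : H -> Prop) :
  finite_set H X -> finite_set H Y -> finite_set H (fun h => X h \/ Y h).
Proof.
  intros [l1 H1] [l2 H2]. exists (l1 ++ l2). intros h [Hh|Hh]; apply in_or_app; auto.
Qed.

Lemma finite_set_star (X : H -> Prop) :
  finite_set H X -> finite_set H (fun h => X (star h)).
Proof.
  intros [l Hl]. exists (map star l). intros h Hh.
  rewrite <- (star_invol H h). apply in_map, Hl, Hh.
Qed.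

Lemma finite_set_list_union (F : list H) (P : H -> H -> Prop) :
  (forall f, In f F -> finite_set H (P f)) ->
  finite_set H (fun h => exists f, In f F /\ P f h).
Proof.
  induction F as [|f F IH]; intros HP.
  - exists nil. intros h (g & [] & _).
  - apply finite_set_incl with (Y := fun h => P f h \/ exists g, In g F /\ P g h).
    + intros h (g & [<-|Hg] & Hgh); [left|right; exists g]; auto.
    + apply finite_set_union; [apply HP, in_eq|apply IH; intros g Hg; apply HP, in_cons, Hg].
Qed.

Definition strictly_descending (c : nat -> H) : Prop := forall n, lt H (c (S n)) (c n).

Lemma descending_le (c : nat -> H) : strictly_descending c ->
  forall i j, i <= j -> le (c j) (c i).
Proof.
  intros Hc i j Hij. induction Hij; [apply le_refl|].
  eapply le_trans; [apply (proj1 (Hc m))|exact IHHij].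
Qed.

Lemma descending_inj (c : nat -> H) : strictly_descending c -> Injective c.
Proof.
  intros Hc.
  assert (Hne : forall i j, i < j -> c j <> c i).
  { intros i j Hij E. destruct (Hc i) as [Hle Hneq]. apply Hneq, le_antisym; [exact Hle|].
    rewrite <- E. apply descending_le; auto. }
  intros i j E. destruct (lt_eq_lt_dec i j) as [[Hij|Hij]|Hij]; auto.
  - exfalso. exact (Hne i j Hij (eq_sym E)).
  - exfalso. exact (Hne j i Hij E).
Qed.

Lemma descending_not_finite (c : nat -> H) (X : H -> Prop) :
  strictly_descending c -> finite_set H X -> ~ (forall n, X (c n)).
Proof.
  intros Hc [l Hl] HX.
  assert (Hnodup : NoDup (map c (seq 0 (S (length l))))).
  { apply Injective_map_NoDup; [apply descending_inj, Hc|apply seq_NoDup]. }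
  apply NoDup_incl_length with (l' := l) in Hnodup.
  - rewrite length_map, length_seq in Hnodup. lia.
  - intros x Hx. apply in_map_iff in Hx as [n [<- _]]. apply Hl, HX.
Qed.

Lemma descending_shift (c : nat -> H) m :
  strictly_descending c -> strictly_descending (fun n => c (n + m)).
Proof. intros Hc n. apply Hc. Qed.

Lemma descending_neq_top (c : nat -> H) n : strictly_descending c -> c (S n) <> star zero.
Proof.
  intros Hc E. destruct (Hc n) as [Hle Hne].
  apply Hne, le_antisym; [exact Hle|]. rewrite E. apply le_star_zero.
Qed.

Lemma dominates_trans (a b c : nat -> H) :
  dominates H a b -> dominates H b c -> dominates H a c.
Proof.
  intros Hab Hbc m. destruct (Hbc m) as [n Hn]. destruct (Hab n) as [k Hk].
  exists k. eapply le_trans; eauto.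
Qed.

Lemma eventually_undominated (c : nat -> H) (d : nat -> nat -> H) (P : nat -> Prop) n :
  strictly_descending c -> (forall i, i < n -> P i -> ~ dominates H (d i) c) ->
  exists N, forall i, i < n -> P i -> forall m, ~ le (d i m) (c N).
Proof.
  intros Hc. induction n as [|n IH]; intros Hund.
  - exists 0. intros i Hi. lia.
  - destruct IH as [N HN]; [intros i Hi; apply Hund; lia|].
    destruct (classic (P n)) as [Pn|Pn].
    + destruct (not_all_ex_not _ _ (Hund n (Nat.lt_succ_diag_r n) Pn)) as [M HM].
      exists (Nat.max N M). intros i Hi Pi m Hle.
      destruct (Nat.eq_dec i n) as [->|Hin].
      * apply HM. exists m. eapply le_trans; [exact Hle|apply descending_le; auto; lia].
      * apply (HN i ltac:(lia) Pi m). eapply le_trans; [exact Hle|apply descending_le; auto; lia].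
    + exists N. intros i Hi Pi.
      apply HN; [|exact Pi]. destruct (Nat.eq_dec i n); [subst; contradiction|lia].
Qed.

Lemma codim_remove_class (xi : H -> Prop) (r : nat -> nat -> H) n k :
  k < n ->
  (forall i j, i < n -> j < n -> i <> j -> ~ chain_equiv H (r i) (r j)) ->
  (forall i, i < n -> i <> k -> desc_chain_in H xi (r i)) ->
  (forall d, desc_chain_in H xi d -> exists i, i < n /\ i <> k /\ chain_equiv H d (r i)) ->
  codim H xi (n - 1).
Proof.
  intros Hk Hineq Hreps Hcov. exists (fun i => r (skip k i)). split; [|split].
  - intros i Hi. apply Hreps; [apply skip_lt, Hi|apply skip_neq].
  - intros i j Hi Hj Hij. apply Hineq; try (apply skip_lt; assumption).
    intros E. apply Hij, (skip_inj k), E.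
  - intros d Hd. destruct (Hcov d Hd) as (j & Hj & Hjk & Hdj).
    destruct (skip_onto k n j Hk Hj Hjk) as (i & Hi & <-). exists i. auto.
Qed.

Lemma uf_not_zero (xi : H -> Prop) : ultrafilter H xi -> ~ xi zero.
Proof. intros [_ U] Z. apply (U zero zero Z Z), zero_min. Qed.

Lemma uf_star (xi : H -> Prop) h : ultrafilter H xi -> xi (star h) <-> ~ xi h.
Proof. intros [U _]. destruct (U h); tauto. Qed.

Lemma uf_up (xi : H -> Prop) h k : ultrafilter H xi -> xi h -> le h k -> xi k.
Proof.
  intros U Xh Hhk. apply NNPP. intros Nk.
  apply (proj2 U h (star k) Xh (proj2 (uf_star xi k U) Nk)). now rewrite star_invol.
Qed.

Lemma below_star_free (p h k : H) :
  p <> star zero -> le h p -> le k p -> ~ le (star h) k.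
Proof.
  intros Hp Hh Hk Hhk. apply Hp.
  assert (Hpp : le (star p) (star (star p))).
  { rewrite star_invol. eapply le_trans; [apply star_rev, Hh|].
    eapply le_trans; [exact Hhk|exact Hk]. }
  apply star_nonself in Hpp. now rewrite <- Hpp, star_invol.
Qed.

Lemma proper_below (xi : H -> Prop) (p a : H) :
  ultrafilter H xi -> p <> star zero -> xi a -> le a p -> proper H a.
Proof.
  intros U Hp Xa Hap. split.
  - intros ->. exact (uf_not_zero xi U Xa).
  - intros ->. apply Hp, le_antisym; [apply le_star_zero|exact Hap].
Qed.

Definition flip (xi A : H -> Prop) : H -> Prop :=
  fun h => (xi h /\ ~ A h) \/ (xi (star h) /\ A (star h)).

Lemma flip_ultrafilter (xi A : H -> Prop) : ultrafilter H xi ->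
  (forall g h, xi g -> le g h -> A h -> A g) ->
  (forall h k, A h -> A k -> ~ le (star h) k) ->
  ultrafilter H (flip xi A).
Proof.
  intros [U1 U2] Adown Afree. split.
  - intros h. unfold flip. rewrite (star_invol H h).
    destruct (U1 h), (classic (A h)), (classic (A (star h))); tauto.
  - intros h k Hh Hk Hle.
    destruct Hh as [[Xh Ah]|[Xh Ah]], Hk as [[Xk Ak]|[Xk Ak]].
    + exact (U2 h k Xh Xk Hle).
    + exact (Ah (Adown h (star k) Xh Hle Ak)).
    + apply Ak, (Adown k (star h) Xk); [|exact Ah].
      rewrite <- (star_invol H k). apply star_rev, Hle.
    + apply (Afree _ _ Ah Ak). now rewrite star_invol.
Qed.

Lemma flip_agree (xi A : H -> Prop) h : ~ A h -> ~ A (star h) -> (flip xi A h <-> xi h).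
Proof. unfold flip. tauto. Qed.

Lemma flip_out (xi A : H -> Prop) h : ultrafilter H xi -> A h -> xi h -> ~ flip xi A h.
Proof.
  intros U Ah Xh [[_ nA]|[Xs _]]; [exact (nA Ah)|exact (proj1 (uf_star xi h U) Xs Xh)].
Qed.

Lemma flip_almost_equal (xi A B : H -> Prop) :
  (forall h, B h -> A h) -> finite_set H (fun h => A h /\ ~ B h) ->
  almost_equal H (flip xi B) (flip xi A).
Proof.
  intros HBA Hfin.
  apply finite_set_incl
    with (Y := fun h => (A h /\ ~ B h) \/ (A (star h) /\ ~ B (star h))).
  - intros h. unfold flip. pose proof (HBA h). pose proof (HBA (star h)). tauto.
  - apply finite_set_union; [exact Hfin|exact (finite_set_star _ Hfin)].
Qed.

Lemma uclass_self (xi : H -> Prop) : ultrafilter H xi -> uclass H xi xi.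
Proof. intros U. split; [exact U|]. exists nil. intros h [[? ?]|[? ?]]; contradiction. Qed.

Definition cone (xi : H -> Prop) (p : H) : H -> Prop := fun h => xi h /\ le h p.

Section Cone.
Variables (xi : H -> Prop) (p : H).
Hypothesis Huf : ultrafilter H xi.
Hypothesis Hp : p <> star zero.

Lemma flip_cone_ultrafilter : ultrafilter H (flip xi (cone xi p)).
Proof.
  apply flip_ultrafilter; [exact Huf| |].
  - intros g h Xg Hgh [_ Hhp]. split; [exact Xg|eapply le_trans; eauto].
  - intros h k [_ Hh] [_ Hk]. exact (below_star_free p h k Hp Hh Hk).
Qed.

Hypothesis Hdisc : discrete H.

Lemma cone_interval_finite f :
  finite_set H (fun h => cone xi p f /\ le f h /\ le h p).
Proof.
  destruct (classic (cone xi p f)) as [[Xf Hfp]|Nf].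
  - destruct (Hdisc f p) as [l Hl].
    + exact (proper_below xi p f Huf Hp Xf Hfp).
    + exact (proper_below xi p p Huf Hp (uf_up xi f p Huf Xf Hfp) (le_refl H p)).
    + exists l. intros h (_ & Hfh & Hhp). apply Hl. auto.
  - exists nil. intros h [Cf _]. contradiction.
Qed.

(* A descending chain with infinitely many terms in the cone's star would place
   infinitely many points in an interval [d m*, p]. *)
Lemma flip_cone_chain d : desc_chain_in H (flip xi (cone xi p)) d ->
  forall m, xi (d m) /\ ~ cone xi p (d m).
Proof.
  intros [Hd Hin].
  assert (Hxi : forall m, xi (d m)).
  { intros m. apply NNPP. intros Nm.
    assert (Htail : forall n, cone xi p (star (d (n + m)))).
    { intros n. destruct (Hin (n + m)) as [[X _]|[_ C]]; [|exact C].
      exfalso. apply Nm, (uf_up xi _ _ Huf X), descending_le; [exact Hd|lia]. }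
    apply (descending_not_finite (fun n => d (n + m)) _ (descending_shift d m Hd)
             (finite_set_star _ (cone_interval_finite (star (d m))))).
    intros n. split; [exact (Htail 0)|split; [|apply Htail]].
    apply star_rev, descending_le; [exact Hd|lia]. }
  intros m. split; [apply Hxi|]. intros C.
  destruct (Hin m) as [[_ nC]|[Xs _]]; [exact (nC C)|].
  exact (proj1 (uf_star xi (d m) Huf) Xs (Hxi m)).
Qed.

Lemma closure_flip_cone : closure H (uclass H (flip xi (cone xi p))) xi.
Proof.
  split; [exact Huf|]. intros F.
  set (B := fun h => cone xi p h /\
              ~ exists f, (In f F \/ In (star f) F) /\ cone xi p f /\ le f h).
  assert (HBA : forall h, B h -> cone xi p h) by (intros h [Ch _]; exact Ch).
  assert (HnB : forall f, In f F \/ In (star f) F -> ~ B f).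
  { intros f Hf [Cf Hnot]. apply Hnot. exists f. auto using le_refl. }
  assert (HBuf : ultrafilter H (flip xi B)).
  { apply flip_ultrafilter; [exact Huf| |].
    - intros g h Xg Hgh [[_ Hhp] Hnot].
      split; [split; [exact Xg|eapply le_trans; eauto]|].
      intros (f & Hf & Cf & Hfg). apply Hnot. exists f.
      split; [exact Hf|split; [exact Cf|eapply le_trans; eauto]].
    - intros h k [[_ Hh] _] [[_ Hk] _]. exact (below_star_free p h k Hp Hh Hk). }
  assert (HBfin : finite_set H (fun h => cone xi p h /\ ~ B h)).
  { apply finite_set_incl with
      (Y := fun h => exists f, In f (F ++ map star F) /\ (cone xi p f /\ le f h /\ le h p)).
    - intros h [Ch nB]. apply NNPP. intros Hn. apply nB. split; [exact Ch|].
      intros (f & Hf & Cf & Hfh). apply Hn. exists f.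
      split; [|split; [exact Cf|split; [exact Hfh|apply Ch]]].
      apply in_or_app. destruct Hf as [Hf|Hf]; [left; exact Hf|right].
      rewrite <- (star_invol H f). apply in_map, Hf.
    - apply finite_set_list_union. intros f _. apply cone_interval_finite. }
  exists (flip xi B). split; [split; [exact HBuf|apply flip_almost_equal; assumption]|].
  intros f Hf. apply flip_agree; apply HnB; [left; exact Hf|right; now rewrite star_invol].
Qed.

Lemma re_lt_flip_cone : ~ finite_set H (cone xi p) ->
  re_lt H (uclass H (flip xi (cone xi p))) (uclass H xi).
Proof.
  intros Hinf. split.
  - exists xi. split; [apply uclass_self, Huf|apply closure_flip_cone].
  - intros Hsame. destruct (proj2 (Hsame xi) (uclass_self xi Huf)) as [_ Hae].
    apply Hinf. eapply finite_set_incl; [|exact Hae].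
    intros h Ch. left. split; [exact (proj1 Ch)|].
    exact (flip_out xi (cone xi p) h Huf Ch (proj1 Ch)).
Qed.

End Cone.

End PocSets.

Theorem mainTheorem17 (H : PocSet) :
  discrete H -> omega_dimensional H ->
  forall (xi : H -> Prop) (delta : nat),
    ultrafilter H xi -> codim H xi delta -> 0 < delta ->
    exists xi1 : H -> Prop,
      ultrafilter H xi1 /\
      re_lt H (uclass H xi1) (uclass H xi) /\
      codim H xi1 (delta - 1).
Proof.
  intros Hdisc _ xi delta Huf [r [Hreps [Hineq Hcov]]] Hpos.
  destruct (exists_minimal_index (fun i j => dominates H (r i) (r j)) delta)
    as [k [Hk Hmin]]; [intros a b c; apply dominates_trans|exact Hineq|exact Hpos|].
  destruct (Hreps k Hk) as [Hc Hxc].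
  destruct (eventually_undominated H (r k) r (fun i => i <> k) delta Hc Hmin) as [N HN].
  set (p := r k (S N)).
  assert (Hp : p <> star zero) by exact (descending_neq_top H (r k) N Hc).
  exists (flip H xi (cone H xi p)). split; [|split].
  - apply flip_cone_ultrafilter; assumption.
  - apply re_lt_flip_cone; try assumption. intros Hfin.
    apply (descending_not_finite H _ _ (descending_shift H (r k) (S N) Hc) Hfin).
    intros n. split; [apply Hxc|apply descending_le; [exact Hc|lia]].
  - apply (codim_remove_class H _ r delta k Hk Hineq).
    + intros i Hi Hik. split; [apply (Hreps i Hi)|]. intros m. left.
      split; [apply (Hreps i Hi)|]. intros [_ Hle].
      apply (HN i Hi Hik m). eapply le_trans; [exact Hle|apply (proj1 (Hc N))].
    + intros d Hd. pose proof (flip_cone_chain H xi p Huf Hp Hdisc d Hd) as Hdx.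
      destruct (Hcov d) as [j [Hj Hdj]]; [split; [apply Hd|intros m; apply Hdx]|].
      exists j. split; [exact Hj|split; [|exact Hdj]]. intros ->.
      destruct (proj1 Hdj (S N)) as [m Hm].
      apply (proj2 (Hdx m)). split; [apply Hdx|exact Hm].
Qed.
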